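(* Let $H$ be a complex Hilbert space and $V=\mathcal{L}(H)_{sa}$. Let $a$ be a finite rank projection in $V$ and $u\in V_{1/2}(a)$. Then there are projections $a_0,a_1,\dots,a_s$ in $V$ with $a=a_0+\sum_{k=1}^s a_k$ and tripotents $u_k\in V_{1/2}(a_k)$ ($1\le k\le s$) such that the subalgebras $V[a_k,u_k]$ are pairwise orthogonal, $a_0\circ u=0$, and $V[a,u]$ is the finite direct sum $$V[a,u]\approx \mathbb{R}a_0\oplus\Big(\bigoplus_{k=1}^sV[a_k,u_k]\Big).$$
   Context: $V$ is the set of self-adjoint bounded operators on $H$, a real Jordan algebra with product $x\circ y=\frac12(xy+yx)$. A projection is $a=a^2=a^*$; rank is the dimension of its range. A tripotent is $u$ with $u^3=u$. $V_{1/2}(a)=\{x: a\circ x=\frac12x\}$. $V[x,y]$ denotes the Jordan subalgebra generated by $x,y$. Two subalgebras are orthogonal if the Jordan product of any element of one with any element of the other vanishes. *)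

From HB Require Import structures.
From mathcomp Require Import all_boot all_order all_algebra.
From mathcomp Require Import reals.
From mathcomp Require Import complex.
Set Implicit Arguments. Unset Strict Implicit. Unset Printing Implicit Defensive.
Import Order.TTheory GRing.Theory Num.Theory.
Local Open Scope ring_scope.

Section Hilbert.
Variable R : realType.
Local Notation C := R[i].
Variable H : lmodType C.
Variable ip : H -> H -> C.   (* inner product, linear in the first argument *)

Definition hnorm (x : H) : R := Num.sqrt (complex.Re (ip x x)).

Definition is_hilbert : Prop :=
  [/\ (forall (c : C) (x y z : H), ip (c *: x + y) z = c * ip x z + ip y z),
      (forall x y : H, ip y x = (ip x y)^*),
      (forall x : H, 0 <= ip x x),
      (forall x : H, ip x x = 0 -> x = 0) &
      (forall s : nat -> H,
         (forall e : R, 0 < e -> exists N, forall m n, (N <= m)%N -> (N <= n)%N ->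
              hnorm (s m - s n) < e) ->
         exists l : H, forall e : R, 0 < e -> exists N, forall n, (N <= n)%N ->
              hnorm (s n - l) < e)].

Definition op_linear (f : H -> H) : Prop :=
  forall (c : C) (x y : H), f (c *: x + y) = c *: f x + f y.
Definition op_bounded (f : H -> H) : Prop :=
  exists M : R, forall x, hnorm (f x) <= M * hnorm x.
Definition op_selfadj (f : H -> H) : Prop :=
  forall x y, ip (f x) y = ip x (f y).

Definition inV (f : H -> H) : Prop :=
  [/\ op_linear f, op_bounded f & op_selfadj f].

Definition op0 : H -> H := fun _ => 0.
Definition op_add (f g : H -> H) : H -> H := fun x => f x + g x.
Definition op_rscale (r : R) (f : H -> H) : H -> H := fun x => (r%:C)%C *: f x.
Definition jprod (f g : H -> H) : H -> H := fun x => 2^-1 *: (f (g x) + g (f x)).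

Definition projection (a : H -> H) : Prop := inV a /\ (forall x, a (a x) = a x).

Definition finite_rank (a : H -> H) : Prop :=
  exists (n : nat) (e : 'I_n -> H), forall x, exists c : 'I_n -> C,
    a x = \sum_(i < n) c i *: e i.

Definition tripotent (u : H -> H) : Prop := forall x, u (u (u x)) = u x.

Definition V_half (a x : H -> H) : Prop := inV x /\ jprod a x = op_rscale 2^-1 x.

Definition jsubalg (S : (H -> H) -> Prop) : Prop :=
  [/\ forall z, S z -> inV z,
      forall z w, S z -> S w -> S (op_add z w),
      forall (r : R) z, S z -> S (op_rscale r z) &
      forall z w, S z -> S w -> S (jprod z w)].
Definition gen (x y : H -> H) : (H -> H) -> Prop :=
  fun z => forall S, jsubalg S -> S x -> S y -> S z.

Definition jorthogonal (A B : (H -> H) -> Prop) : Prop :=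
  forall z w, A z -> B w -> jprod z w = op0.

End Hilbert.

From HB Require Import structures.
From mathcomp Require Import all_boot all_order all_algebra.
From mathcomp Require Import reals.
From mathcomp Require Import complex.
From Stdlib Require Import FunctionalExtensionality IndefiniteDescription.
From mathcomp Require Import ring.
Set Implicit Arguments. Unset Strict Implicit. Unset Printing Implicit Defensive.
Import Order.TTheory GRing.Theory Num.Theory.
Local Open Scope ring_scope.

(* The operator au2a = a u^2 a is positive and of finite rank, so it is annihilated
   by X (X - mu_1) ... (X - mu_s) with distinct mu_k > 0.  Evaluating the Lagrange
   polynomials of the nodes 0, mu_1, ..., mu_s at au2a gives orthogonal projections
   p_0, ..., p_s summing to the identity; put a0 = a p_0, a_k = p_k and
   u_k = mu_k^(-1/2) (a_k u + u a_k).  From a u a = 0 and u^2 a = au2a one gets that the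
   u_k are tripotents with u = sum_k mu_k^(1/2) u_k, and that each V[a_k, u_k] lies in
   the corner of the projection u_k^2; these corners are mutually orthogonal and
   orthogonal to a0.  Hence the elements lam a0 + sum_k x_k with x_k in V[a_k, u_k] form
   a Jordan subalgebra, with unique components, which contains a and u and is
   contained in V[a, u]. *)

Lemma sum_nat_single (V : nmodType) (F : nat -> V) m n k : (m <= k < n)%N ->
  (forall j, (m <= j < n)%N -> j != k -> F j = 0) -> \sum_(m <= j < n) F j = F k.
Proof.
move=> k_in F0; rewrite (bigD1_seq k) ?mem_index_iota ?iota_uniq //= big1_seq ?addr0 //.
by move=> j /andP [j_neq_k]; rewrite mem_index_iota => j_in; apply: F0.
Qed.

Section Operators.
Variable R : realType.
Local Notation C := R[i].
Variable H : lmodType C.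

Lemma mem_ext (S : (H -> H) -> Prop) f g : f =1 g -> S f -> S g.
Proof. by move=> /functional_extensionality ->. Qed.

Section Linear.
Variable f : H -> H.
Hypothesis lin_f : op_linear f.

Lemma op_linearD x y : f (x + y) = f x + f y.
Proof. by rewrite -[x]scale1r lin_f !scale1r. Qed.

Lemma op_linear0 : f 0 = 0.
Proof. by apply: (addrI (f 0)); rewrite -op_linearD !addr0. Qed.

Lemma op_linearZ c x : f (c *: x) = c *: f x.
Proof. by rewrite -[c *: x]addr0 lin_f op_linear0 addr0. Qed.

Lemma op_linearN x : f (- x) = - f x.
Proof. by rewrite -scaleN1r op_linearZ scaleN1r. Qed.

Lemma op_linearB x y : f (x - y) = f x - f y.
Proof. by rewrite op_linearD op_linearN. Qed.

Lemma op_linear_sum I (r : seq I) (P : pred I) (F : I -> H) :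
  f (\sum_(i <- r | P i) F i) = \sum_(i <- r | P i) f (F i).
Proof. exact: (big_morph f op_linearD op_linear0). Qed.

End Linear.

Lemma op_linear_comp (f g : H -> H) : op_linear f -> op_linear g -> op_linear (fun x => f (g x)).
Proof. by move=> lf lg c x y; rewrite lg lf. Qed.

Lemma op_linear_iter (f : H -> H) n : op_linear f -> op_linear (iter n f).
Proof. by move=> lf; elim: n => [//|n IH]; apply: op_linear_comp. Qed.


(** * Polynomials in an operator *)

Section PolynomialCalculus.
Variable T : H -> H.
Hypothesis lin_T : op_linear T.

Definition horner_op (p : {poly C}) (y : H) : H := \sum_(i < size p) p`_i *: iter i T y.

Definition annihilates (p : {poly C}) := forall y, horner_op p y = 0.

Lemma horner_op_widen n (p : {poly C}) y : (size p <= n)%N ->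
  horner_op p y = \sum_(i < n) p`_i *: iter i T y.
Proof.
move=> le_p_n; rewrite /horner_op (big_ord_widen n (fun i => p`_i *: iter i T y) le_p_n).
rewrite big_mkcond; apply: eq_bigr => i _; case: ifP => // /negbT.
by rewrite -leqNgt => /(nth_default 0) ->; rewrite scale0r.
Qed.

Lemma horner_opD (p q : {poly C}) y : horner_op (p + q) y = horner_op p y + horner_op q y.
Proof.
set n := maxn (size p) (size q).
rewrite (@horner_op_widen n (p + q)); last exact: leq_trans (size_polyD _ _) _.
rewrite (@horner_op_widen n p) ?leq_maxl // (@horner_op_widen n q) ?leq_maxr //.
by rewrite -big_split; apply: eq_bigr => i _; rewrite coefD scalerDl.
Qed.

Lemma horner_opZ c (p : {poly C}) y : horner_op (c *: p) y = c *: horner_op p y.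
Proof.
rewrite (@horner_op_widen (size p) (c *: p)) ?size_scale_leq // scaler_sumr.
by apply: eq_bigr => i _; rewrite coefZ scalerA.
Qed.

Lemma horner_opC c y : horner_op c%:P y = c *: y.
Proof. by rewrite (@horner_op_widen 1) ?size_polyC ?leq_b1 // big_ord1 coefC. Qed.

Lemma horner_op0 y : horner_op 0 y = 0.
Proof. by rewrite /horner_op size_poly0 big_ord0. Qed.

Lemma horner_opMX (p : {poly C}) y : horner_op (p * 'X) y = horner_op p (T y).
Proof.
rewrite (@horner_op_widen (size p).+1 (p * 'X)); last first.
  by apply: leq_trans (size_polyMleq _ _) _; rewrite size_polyX addn2.
rewrite big_ord_recl coefMX scale0r add0r.
by apply: eq_bigr => i _; rewrite coefMX -iterSr.
Qed.

Lemma horner_op_linear (p : {poly C}) : op_linear (horner_op p).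
Proof.
move=> c x y; rewrite /horner_op scaler_sumr -big_split; apply: eq_bigr => i _.
by rewrite op_linear_iter // scalerDr !scalerA mulrC.
Qed.

Lemma horner_op_commute (S : H -> H) (p : {poly C}) y :
  op_linear S -> (forall x, S (T x) = T (S x)) ->
  S (horner_op p y) = horner_op p (S y).
Proof.
move=> lin_S ST_comm; rewrite /horner_op (op_linear_sum lin_S); apply: eq_bigr => i _.
rewrite (op_linearZ lin_S); congr (_ *: _).
by elim: (nat_of_ord i) => [|m IH] //=; rewrite ST_comm IH.
Qed.

Lemma horner_opM (p q : {poly C}) y : horner_op (p * q) y = horner_op p (horner_op q y).
Proof.
elim/poly_ind: p y => [|p c IH] y; first by rewrite mul0r !horner_op0.
rewrite mulrDl mulrAC mul_polyC !horner_opD horner_opZ !horner_opMX IH horner_opC.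
by rewrite (horner_op_commute _ _ lin_T).
Qed.

Lemma horner_opX y : horner_op 'X y = T y.
Proof. by rewrite -['X]mul1r horner_opMX horner_opC scale1r. Qed.

Lemma horner_opB (p q : {poly C}) y : horner_op (p - q) y = horner_op p y - horner_op q y.
Proof. by rewrite horner_opD -[- q]scaleN1r horner_opZ scaleN1r. Qed.

Lemma horner_opXn n y : horner_op 'X^n y = iter n T y.
Proof.
elim: n y => [|n IH] y; first by rewrite expr0 horner_opC scale1r.
by rewrite exprSr horner_opMX IH -iterSr.
Qed.

Lemma horner_op_sum I (r : seq I) (P : pred I) (F : I -> {poly C}) y :
  horner_op (\sum_(i <- r | P i) F i) y = \sum_(i <- r | P i) horner_op (F i) y.
Proof. exact: (big_morph (horner_op^~ y) (fun p q => horner_opD p q y) (horner_op0 y)). Qed.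

Lemma annihilates_mull (p q : {poly C}) : annihilates p -> annihilates (q * p).
Proof. by move=> ann_p y; rewrite horner_opM ann_p (op_linear0 (horner_op_linear q)). Qed.

End PolynomialCalculus.

Lemma dependent_in_span n (e : 'I_n -> H) (v : 'I_n.+1 -> H) :
  (forall k, exists c : 'I_n -> C, v k = \sum_(i < n) c i *: e i) ->
  exists c : 'I_n.+1 -> C, (exists k, c k != 0) /\ \sum_(k < n.+1) c k *: v k = 0.
Proof.
move=> /functional_choice [A hA].
pose M : 'M[C]_(n.+1, n) := \matrix_(k, i) A k i.
have /matrix0Pn [i [j kij]] : kermx M != 0.
  by rewrite -mxrank_eq0 mxrank_ker subn_eq0 -ltnNge ltnS rank_leq_col.
exists (kermx M i); split; first by exists j.
under eq_bigr => k _ do rewrite hA scaler_sumr.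
rewrite exchange_big; apply: big1 => l _.
under eq_bigr => k _ do rewrite scalerA.
rewrite -scaler_suml (_ : \sum_k _ = 0) ?scale0r //.
transitivity ((kermx M *m M) i l); last by rewrite mulmx_ker mxE.
by rewrite mxE; apply: eq_bigr => k _; congr (_ * _); rewrite /M mxE.
Qed.

(* Each e i is killed by a nonzero polynomial without constant term, as the
   T^(k+1) (e i) lie in the span of e; their product times X kills everything. *)
Lemma finite_rank_annihilator (T : H -> H) : op_linear T -> finite_rank T ->
  exists Q : {poly C}, Q != 0 /\ annihilates T Q.
Proof.
move=> lin_T [n [e he]].
have /functional_choice [c hc] : forall i : 'I_n, exists c : 'I_n.+1 -> C,
    (exists k, c k != 0) /\ \sum_(k < n.+1) c k *: iter k.+1 T (e i) = 0.
  by move=> i; apply: dependent_in_span => k; rewrite iterS; apply: he.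
pose q i := \sum_(k < n.+1) c i k *: 'X^(k.+1).
have q_neq0 i : q i != 0.
  case: (hc i) => [[j cij] _]; apply: contra_neq cij => /(congr1 (coefp j.+1)).
  rewrite /= coef0 coef_sum (bigD1 j) //= coefZ coefXn eqxx mulr1 big1 ?addr0 //.
  by move=> k kj; rewrite coefZ coefXn eqSS (inj_eq val_inj) eq_sym (negbTE kj) mulr0.
have q_e i : horner_op T (q i) (e i) = 0.
  case: (hc i) => _ <-; rewrite horner_op_sum.
  by apply: eq_bigr => k _; rewrite horner_opZ horner_opXn.
exists ((\prod_(i < n) q i) * 'X); split.
  by rewrite mulf_neq0 ?polyX_eq0 // prodf_seq_neq0; apply/allP => i _; apply: q_neq0.
move=> y; rewrite horner_opMX; have [d ->] := he y.
rewrite (op_linear_sum (horner_op_linear lin_T _)); apply: big1 => i _.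
rewrite (op_linearZ (horner_op_linear lin_T _)) (bigD1 i) //= mulrC horner_opM // q_e.
by rewrite (op_linear0 (horner_op_linear lin_T _)) scaler0.
Qed.

Lemma half_double (v : H) : 2^-1 *: (v + v) = v.
Proof. by rewrite -mulr2n -(scaler_nat 2 v) scalerA mulVf ?pnatr_eq0 // scale1r. Qed.

Lemma conjC_realc (r : R) : (r%:C%C)^* = r%:C%C :> C.
Proof. exact: conjc_real. Qed.

Lemma realc_half : ((2^-1 : R)%:C)%C = 2^-1 :> C.
Proof. by rewrite rmorphV ?unitfE ?pnatr_eq0 // rmorph_nat. Qed.

Section InnerProduct.
Variable ip : H -> H -> C.
Hypothesis hH : is_hilbert ip.

Lemma ipDZl c x y z : ip (c *: x + y) z = c * ip x z + ip y z.
Proof. by case: hH => h _ _ _ _; apply: h. Qed.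

Lemma ipC x y : ip y x = (ip x y)^*.
Proof. by case: hH => _ h _ _ _; apply: h. Qed.

Lemma ip_ge0 x : 0 <= ip x x.
Proof. by case: hH => _ _ h _ _; apply: h. Qed.

Lemma ip_eq0 x : ip x x = 0 -> x = 0.
Proof. by case: hH => _ _ _ h _; apply: h. Qed.

Lemma ipDl x y z : ip (x + y) z = ip x z + ip y z.
Proof. by rewrite -[x]scale1r ipDZl mul1r scale1r. Qed.

Lemma ip0l z : ip 0 z = 0.
Proof. by apply: (addrI (ip 0 z)); rewrite -ipDl !addr0. Qed.

Lemma ipZl c x z : ip (c *: x) z = c * ip x z.
Proof. by rewrite -[c *: x]addr0 ipDZl ip0l addr0. Qed.

Lemma ipBl x y z : ip (x - y) z = ip x z - ip y z.
Proof. by rewrite ipDl -scaleN1r ipZl mulN1r. Qed.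

Lemma ipDr x y z : ip x (y + z) = ip x y + ip x z.
Proof. by rewrite ipC ipDl rmorphD /= -!ipC. Qed.

Lemma ipZr c x y : ip x (c *: y) = c^* * ip x y.
Proof. by rewrite ipC ipZl rmorphM /= -ipC. Qed.

Lemma ip0r x : ip x 0 = 0.
Proof. by rewrite ipC ip0l rmorph0. Qed.

Lemma ipBr x y z : ip x (y - z) = ip x y - ip x z.
Proof. by rewrite ipC ipBl rmorphB /= -!ipC. Qed.

Definition sqnorm (x : H) : R := complex.Re (ip x x).

Lemma ip_sqnorm x : ip x x = (sqnorm x)%:C%C.
Proof. by rewrite /sqnorm RRe_real // ger0_real // ip_ge0. Qed.

Lemma sqnorm_ge0 x : 0 <= sqnorm x.
Proof. by rewrite -lecR -ip_sqnorm ip_ge0. Qed.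

(* Parallelogram law, with the [x - y] term dropped. *)
Lemma sqnormD_le x y : sqnorm (x + y) <= 2 * sqnorm x + 2 * sqnorm y.
Proof.
have parallelogram : ((sqnorm (x + y) + sqnorm (x - y))%:C = (2 * sqnorm x + 2 * sqnorm y)%:C)%C.
  rewrite !rmorphD !rmorphM /= rmorph_nat -!ip_sqnorm !ipBl !ipDl !ipBr !ipDr.
  ring.
by move/complexI: parallelogram => <-; rewrite lerDl sqnorm_ge0.
Qed.

Lemma normc2_ge0 (c : C) : 0 <= complex.Re (c * c^*).
Proof. by case: c => p q /=; rewrite mulrN opprK addr_ge0 // -expr2 sqr_ge0. Qed.

Lemma sqnormZ c x : sqnorm (c *: x) = complex.Re (c * c^*) * sqnorm x.
Proof.
rewrite /sqnorm ipZl ipZr mulrA [ip x x]ip_sqnorm.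
by case: (c * c^*) => p q /=; rewrite !mulr0 subr0.
Qed.

Definition sq_bounded (f : H -> H) :=
  exists K : R, 0 <= K /\ forall x, sqnorm (f x) <= K * sqnorm x.

Lemma op_boundedE f : op_bounded ip f <-> sq_bounded f.
Proof.
split.
  case=> M hM; exists (M ^+ 2); split; first exact: sqr_ge0.
  move=> x; have := hM x; rewrite /hnorm -/(sqnorm _) -/(sqnorm _) => hx.
  have fx_ge0 : 0 <= Num.sqrt (sqnorm (f x)) := sqrtr_ge0 _.
  have := ler_pXn2r (n := 2) isT fx_ge0 (le_trans fx_ge0 hx); rewrite hx => /esym.
  by rewrite exprMn !sqr_sqrtr ?sqnorm_ge0.
case=> K [K0 hK]; exists (Num.sqrt K) => x; rewrite /hnorm -sqrtrM //.
exact/ler_wsqrtr/hK.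
Qed.

Lemma sq_boundedD f g : sq_bounded f -> sq_bounded g -> sq_bounded (fun x => f x + g x).
Proof.
case=> K [K0 hK] [L [L0 hL]]; exists (2 * K + 2 * L); split.
  by rewrite addr_ge0 // mulr_ge0.
move=> x; apply: le_trans (sqnormD_le _ _) _.
rewrite [X in _ <= X]mulrDl -[X in _ <= X + _]mulrA -[X in _ <= _ + X]mulrA.
by rewrite lerD // ler_pM2l.
Qed.

Lemma sq_boundedZ c f : sq_bounded f -> sq_bounded (fun x => c *: f x).
Proof.
case=> K [K0 hK]; exists (complex.Re (c * c^*) * K); split.
  by rewrite mulr_ge0 // normc2_ge0.
by move=> x; rewrite sqnormZ -mulrA ler_wpM2l // normc2_ge0.
Qed.

Lemma sq_bounded_comp f g : sq_bounded f -> sq_bounded g -> sq_bounded (fun x => f (g x)).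
Proof.
case=> K [K0 hK] [L [L0 hL]]; exists (K * L); split; first exact: mulr_ge0.
by move=> x; apply: le_trans (hK _) _; rewrite -mulrA ler_wpM2l.
Qed.

Lemma inV_linear f : inV ip f -> op_linear f. Proof. by case. Qed.
Lemma inV_selfadj f : inV ip f -> op_selfadj ip f. Proof. by case. Qed.
Lemma inV_sq_bounded f : inV ip f -> sq_bounded f. Proof. by case=> _ /op_boundedE. Qed.

Lemma inV_intro f : op_linear f -> sq_bounded f -> op_selfadj ip f -> inV ip f.
Proof. by move=> lf bf sf; split => //; apply/op_boundedE. Qed.

Lemma inV_id : inV ip id.
Proof. by apply: inV_intro => //; exists 1; split => // x; rewrite mul1r. Qed.

Lemma inV_add f g : inV ip f -> inV ip g -> inV ip (op_add f g).
Proof.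
move=> hf hg; apply: inV_intro.
- move=> c x y; rewrite /op_add (inV_linear hf) (inV_linear hg) scalerDr.
  by rewrite addrACA.
- exact: sq_boundedD (inV_sq_bounded hf) (inV_sq_bounded hg).
- by move=> x y; rewrite /op_add ipDl ipDr (inV_selfadj hf) (inV_selfadj hg).
Qed.

Lemma inV_rscale r f : inV ip f -> inV ip (op_rscale r f).
Proof.
move=> hf; apply: inV_intro.
- by move=> c x y; rewrite /op_rscale (inV_linear hf) scalerDr !scalerA mulrC.
- exact: sq_boundedZ (inV_sq_bounded hf).
- by move=> x y; rewrite /op_rscale ipZl ipZr conjC_realc (inV_selfadj hf).
Qed.

Lemma inV_scale_real (c : C) f : c \is Num.real -> inV ip f -> inV ip (fun x => c *: f x).
Proof.
move=> c_real /(inV_rscale (complex.Re c)); apply: mem_ext => x.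
by rewrite /op_rscale RRe_real.
Qed.

Lemma inV_jprod f g : inV ip f -> inV ip g -> inV ip (jprod f g).
Proof.
move=> hf hg; have lf := inV_linear hf; have lg := inV_linear hg.
apply: inV_intro.
- move=> c x y; rewrite /jprod lg lf lf lg !scalerDr !scalerA mulrC.
  by rewrite addrACA.
- by apply/sq_boundedZ/sq_boundedD; apply: sq_bounded_comp; apply: inV_sq_bounded.
- move=> x y; rewrite /jprod ipZl ipZr ipDl ipDr.
  rewrite (inV_selfadj hf (g x)) (inV_selfadj hg x) (inV_selfadj hg (f x)).
  by rewrite (inV_selfadj hf x) addrC rmorphV ?unitfE ?pnatr_eq0 // rmorph_nat.
Qed.

Lemma inV_comp f g : inV ip f -> inV ip g -> (forall x, f (g x) = g (f x)) ->
  inV ip (fun x => f (g x)).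
Proof.
move=> hf hg fg_comm; apply: inV_intro.
- exact: op_linear_comp (inV_linear hf) (inV_linear hg).
- exact: sq_bounded_comp (inV_sq_bounded hf) (inV_sq_bounded hg).
- by move=> x y; rewrite (inV_selfadj hf) (inV_selfadj hg) fg_comm.
Qed.

Section JordanSubalgebra.
Variable S : (H -> H) -> Prop.
Hypothesis S_alg : jsubalg ip S.

Lemma jsubalg_add z w : S z -> S w -> S (op_add z w).
Proof. by case: S_alg => _ S_add _ _; apply: S_add. Qed.

Lemma jsubalg_rscale r z : S z -> S (op_rscale r z).
Proof. by case: S_alg => _ _ S_scale _; apply: S_scale. Qed.

Lemma jsubalg_jprod z w : S z -> S w -> S (jprod z w).
Proof. by case: S_alg => _ _ _ S_jprod; apply: S_jprod. Qed.

Lemma jsubalg_sum (I : eqType) (r : seq I) (P : pred I) (F : I -> H -> H) f :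
  S f -> (forall i, i \in r -> P i -> S (F i)) -> S (fun y => \sum_(i <- r | P i) F i y).
Proof.
move=> Sf; elim: r => [|j r IH] SF.
  by apply: mem_ext (jsubalg_rscale 0 Sf) => y; rewrite /op_rscale big_nil scale0r.
have SF_r i : i \in r -> P i -> S (F i) by move=> ir; apply: SF; rewrite inE ir orbT.
case Pj: (P j); last by apply: mem_ext (IH SF_r) => y; rewrite big_cons Pj.
apply: mem_ext (jsubalg_add (SF j (mem_head j r) Pj) (IH SF_r)) => y.
by rewrite /op_add big_cons Pj.
Qed.

(* Only monomials of positive degree: the constant term would need the identity. *)
Lemma jsubalg_horner_op (x : H -> H) (p : {poly C}) :
  S x -> p \is a polyOver Num.real -> p`_0 = 0 -> S (horner_op x p).
Proof.
move=> Sx /polyOverP p_real p0.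
have S_iter i : S (iter i.+1 x).
  elim: i => [|i IH]; first exact: Sx.
  apply: mem_ext (jsubalg_jprod Sx IH) => y.
  by rewrite /jprod -iterSr -iterS half_double.
apply: (jsubalg_sum Sx) => -[[|i] _] _ _ /=.
  by apply: mem_ext (jsubalg_rscale 0 Sx) => y; rewrite /op_rscale p0 !scale0r.
apply: mem_ext (jsubalg_rscale (complex.Re p`_i.+1) (S_iter i)) => y.
by rewrite /op_rscale RRe_real.
Qed.

End JordanSubalgebra.

Lemma inV_jsubalg : jsubalg ip (inV ip).
Proof. by split => // [z w|r z|z w]; [apply: inV_add | apply: inV_rscale | apply: inV_jprod]. Qed.

(** * Spectral projections of a positive finite-rank operator *)

Definition PX (s : seq C) : {poly C} := \prod_(z <- s) ('X - z%:P).

Lemma PX_rem z s : z \in s -> PX s = ('X - z%:P) * PX (rem z s).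
Proof. by move=> zs; rewrite /PX (perm_big _ (perm_to_rem zs)) big_cons. Qed.

Section PositiveOperator.
Variable T : H -> H.
Hypothesis T_V : inV ip T.
Hypothesis T_pos : forall y, 0 <= ip (T y) y.

Lemma eigenvalue_ge0 z y : T y = z *: y -> y != 0 -> 0 <= z.
Proof.
move=> Ty y_neq0; have yy_neq0 : ip y y != 0 by apply: contra_neq y_neq0; apply: ip_eq0.
have -> : z = ip (T y) y / ip y y by rewrite Ty ipZl mulfK.
by rewrite divr_ge0 ?ip_ge0.
Qed.

Lemma annihilates_drop_XsubC z p : ~~ (0 <= z) ->
  annihilates T (('X - z%:P) * p) -> annihilates T p.
Proof.
move=> z_lt0 ann y; apply: contraNeq z_lt0 => w_neq0; apply: eigenvalue_ge0 w_neq0.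
apply/eqP; rewrite -subr_eq0 -(horner_opX T) -(horner_opC T) -horner_opB.
by rewrite -(horner_opM (inV_linear T_V)) ann.
Qed.

(* Self-adjointness of [T - z] makes its kernel equal to the kernel of its square. *)
Lemma annihilates_XsubC_simple z p : z \is Num.real ->
  annihilates T (('X - z%:P) * (('X - z%:P) * p)) -> annihilates T (('X - z%:P) * p).
Proof.
move=> z_real ann y; have lin_T := inV_linear T_V.
set w := horner_op T (('X - z%:P) * p) y.
have selfadj_shift g : ip g w = ip (T g - z *: g) (horner_op T p y).
  rewrite /w (horner_opM lin_T) horner_opB horner_opX horner_opC.
  by rewrite ipBr ipZr ipBl ipZl (conj_Creal z_real) (inV_selfadj T_V).
apply: ip_eq0; rewrite selfadj_shift -(horner_opX T) -(horner_opC T) -horner_opB.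
by rewrite -!(horner_opM lin_T) ann ip0l.
Qed.

Lemma annihilates_simple_nonneg_roots zs : forall ms, uniq ms -> all (fun m => 0 <= m) ms ->
  annihilates T (PX ms * PX zs) ->
  exists ms', [/\ uniq ms', all (fun m => 0 <= m) ms' & annihilates T (PX ms')].
Proof.
elim: zs => [|z zs IH] ms ums pms; first by rewrite /PX big_nil mulr1; exists ms.
rewrite /PX big_cons -/(PX zs) -/(PX ms) => ann.
have [z_ge0|z_lt0] := boolP (0 <= z); last first.
  by apply: IH ums pms _; apply: (annihilates_drop_XsubC z_lt0); rewrite mulrCA.
have [z_ms|z_notin] := boolP (z \in ms).
  apply: IH ums pms _; rewrite (PX_rem z_ms) -mulrA.
  apply: annihilates_XsubC_simple; first exact: ger0_real.
  by move: ann; rewrite (PX_rem z_ms) -mulrA [PX (rem z ms) * _]mulrCA.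
apply: (IH (z :: ms)); rewrite /= ?z_notin ?z_ge0 //.
by rewrite /PX big_cons -/(PX ms) -mulrA mulrCA.
Qed.

Lemma positive_spectral_nodes : finite_rank T ->
  exists ms, [/\ uniq ms, all (fun m => 0 < m) ms & annihilates T (PX (0 :: ms))].
Proof.
move=> /(finite_rank_annihilator (inV_linear T_V)) [Q [Q_neq0 ann_Q]].
have [r Q_split] := closed_field_poly_normal Q.
have [|ms [ums pms ann]] := @annihilates_simple_nonneg_roots r [::] isT isT.
  move=> y; rewrite /PX big_nil mul1r.
  have := ann_Q y; rewrite {1}Q_split horner_opZ => /(congr1 ( *:%R (lead_coef Q)^-1)).
  by rewrite scalerA mulVf ?lead_coef_eq0 // scale1r scaler0.
exists (rem 0 ms); split; first exact: rem_uniq.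
  apply/allP => m; rewrite (mem_rem_uniq _ ums) inE => /andP [m_neq0 m_ms].
  by rewrite lt0r m_neq0; move/allP: pms; apply.
rewrite /PX big_cons -/(PX (rem 0 ms)).
have [zero_ms|zero_notin] := boolP (0 \in ms); first by rewrite -PX_rem.
by rewrite rem_id //; exact: (annihilates_mull (inV_linear T_V) _ ann).
Qed.

End PositiveOperator.

Lemma polyOver_realM (p q : {poly C}) :
  p \is a polyOver Num.real -> q \is a polyOver Num.real -> p * q \is a polyOver Num.real.
Proof.
move=> /polyOverP p_real /polyOverP q_real; apply/polyOverP => i.
by rewrite coefM rpred_sum // => j _; rewrite rpredM.
Qed.

Lemma inV_iter (T : H -> H) n : inV ip T -> inV ip (iter n T).
Proof.
move=> T_V; elim: n => [|n IH]; first exact: inV_id.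
by apply: inV_comp T_V IH _ => x; rewrite -iterSr.
Qed.

Lemma inV_horner_op (T : H -> H) (p : {poly C}) : inV ip T ->
  p \is a polyOver Num.real -> inV ip (horner_op T p).
Proof.
move=> T_V /polyOverP p_real; apply: (jsubalg_sum inV_jsubalg inV_id) => i _ _.
exact: inV_scale_real (p_real i) (inV_iter i T_V).
Qed.

Section SpectralProjections.
Variable T : H -> H.
Hypothesis T_V : inV ip T.
Variable ns : seq C.
Hypothesis ns_uniq : uniq ns.
Hypothesis ann_ns : annihilates T (PX ns).
Local Notation n := (size ns).
Let lin_T := inV_linear T_V.

Definition lagrange (k : nat) : {poly C} :=
  (\prod_(j < n | j != k :> nat) (ns`_k - ns`_j))^-1 *:
  \prod_(j < n | j != k :> nat) ('X - (ns`_j)%:P).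

Lemma lagrange_node k j : (k < n)%N -> (j < n)%N -> (lagrange k).[ns`_j] = (j == k)%:R.
Proof.
move=> lt_k lt_j; rewrite hornerZ horner_prod.
under eq_bigr => i _ do rewrite hornerXsubC.
have [->|j_neq_k] := eqVneq j k.
  rewrite mulVf // prodf_seq_neq0; apply/allP => i _; apply/implyP => i_neq_k.
  by rewrite subr_eq0 nth_uniq // eq_sym.
by rewrite [X in _ * X](bigD1 (Ordinal lt_j)) //= subrr mul0r mulr0.
Qed.

Lemma horner_op_nodes (p q : {poly C}) y :
  (forall j, (j < n)%N -> p.[ns`_j] = q.[ns`_j]) -> horner_op T p y = horner_op T q y.
Proof.
move=> pq_nodes; apply/eqP; rewrite -subr_eq0 -horner_opB.
have roots_ns : all (root (p - q)) ns.
  by apply/(all_nthP 0) => j lt_j; rewrite rootE hornerD hornerN pq_nodes // subrr.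
have [r ->] := uniq_roots_prod_XsubC roots_ns (etrans (uniq_rootsE ns) ns_uniq).
by rewrite (annihilates_mull lin_T r ann_ns).
Qed.

Definition eigenproj (k : nat) : H -> H := horner_op T (lagrange k).

Lemma eigenproj_idem k y : (k < n)%N -> eigenproj k (eigenproj k y) = eigenproj k y.
Proof.
move=> lt_k; rewrite /eigenproj -(horner_opM lin_T); apply: horner_op_nodes => j lt_j.
by rewrite hornerM lagrange_node //; case: (j == k); rewrite ?mulr1 ?mulr0.
Qed.

Lemma eigenproj_orth j k y : (j < n)%N -> (k < n)%N -> j != k ->
  eigenproj j (eigenproj k y) = 0.
Proof.
move=> lt_j lt_k j_neq_k; rewrite /eigenproj -(horner_opM lin_T) -(horner_op0 T y).
apply: horner_op_nodes => i lt_i; rewrite hornerM !lagrange_node // horner0.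
by have [->|] := eqVneq i j; rewrite ?(negbTE j_neq_k) ?mulr0 ?mul0r.
Qed.

Lemma eigenproj_eigen k y : (k < n)%N -> T (eigenproj k y) = ns`_k *: eigenproj k y.
Proof.
move=> lt_k; rewrite /eigenproj -horner_opX -(horner_opM lin_T) -horner_opZ.
apply: horner_op_nodes => j lt_j; rewrite hornerM hornerZ hornerX lagrange_node //.
by have [->|] := eqVneq j k; rewrite ?mulr0.
Qed.

Lemma eigenproj_commute (S : H -> H) k y : op_linear S -> (forall x, S (T x) = T (S x)) ->
  S (eigenproj k y) = eigenproj k (S y).
Proof. exact: horner_op_commute. Qed.

Lemma sum_eigenproj y : \sum_(k < n) eigenproj k y = y.
Proof.
rewrite -horner_op_sum -[RHS]scale1r -(horner_opC T); apply: horner_op_nodes => j lt_j.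
rewrite horner_sum hornerC (bigD1 (Ordinal lt_j)) //= lagrange_node // eqxx big1 ?addr0 //.
move=> k k_neq_j; rewrite lagrange_node //; case: (j =P k) => // jk.
by case/eqP: k_neq_j; apply: val_inj; rewrite /= jk.
Qed.

Lemma lagrange_real k : all (fun m => m \is Num.real) ns -> lagrange k \is a polyOver Num.real.
Proof.
move=> /allP ns_real.
have node_real j : ns`_j \is Num.real.
  by have [/(mem_nth 0)/ns_real //|le_n_j] := ltnP j n; rewrite nth_default.
apply: polyOverZ; first by rewrite realV rpred_prod // => j _; rewrite rpredB.
apply: (big_ind (fun p : {poly C} => p \is a polyOver Num.real)).
- by rewrite polyOverC rpred1.
- exact: polyOver_realM.
- by move=> j _; rewrite polyOverXsubC.
Qed.

Lemma inV_eigenproj k : all (fun m => m \is Num.real) ns -> inV ip (eigenproj k).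
Proof. by move=> ns_real; apply: inV_horner_op T_V (lagrange_real k ns_real). Qed.

End SpectralProjections.

(** * Generated subalgebras and orthogonal sums *)

Lemma gen_l x y : gen ip x y x. Proof. by []. Qed.
Lemma gen_r x y : gen ip x y y. Proof. by []. Qed.

Lemma gen_add x y z w : gen ip x y z -> gen ip x y w -> gen ip x y (op_add z w).
Proof. by move=> gz gw S S_alg Sx Sy; apply: (jsubalg_add S_alg); [apply: gz | apply: gw]. Qed.

Lemma gen_rscale x y r z : gen ip x y z -> gen ip x y (op_rscale r z).
Proof. by move=> gz S S_alg Sx Sy; apply: (jsubalg_rscale S_alg); apply: gz. Qed.

Lemma gen_jprod x y z w : gen ip x y z -> gen ip x y w -> gen ip x y (jprod z w).
Proof. by move=> gz gw S S_alg Sx Sy; apply: (jsubalg_jprod S_alg); [apply: gz | apply: gw]. Qed.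

Lemma gen_inV x y z : inV ip x -> inV ip y -> gen ip x y z -> inV ip z.
Proof. by move=> x_V y_V; apply; first exact: inV_jsubalg. Qed.

Lemma gen_jsubalg x y : inV ip x -> inV ip y -> jsubalg ip (gen ip x y).
Proof.
move=> x_V y_V; split => [z|z w|r z|z w]; first exact: gen_inV.
- exact: gen_add.
- exact: gen_rscale.
- exact: gen_jprod.
Qed.

Definition corner (q x : H -> H) : Prop :=
  [/\ inV ip x, forall y, q (x y) = x y & forall y, x (q y) = x y].

Lemma corner_jsubalg q : op_linear q -> jsubalg ip (corner q).
Proof.
move=> lin_q; split.
- by move=> z [].
- move=> z w [z_V qz zq] [w_V qw wq]; split; first exact: inV_add.
    by move=> y; rewrite /op_add (op_linearD lin_q) qz qw.
  by move=> y; rewrite /op_add zq wq.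
- move=> r z [z_V qz zq]; split; first exact: inV_rscale.
    by move=> y; rewrite /op_rscale (op_linearZ lin_q) qz.
  by move=> y; rewrite /op_rscale zq.
- move=> z w [z_V qz zq] [w_V qw wq]; split; first exact: inV_jprod.
    by move=> y; rewrite /jprod (op_linearZ lin_q) (op_linearD lin_q) qz qw.
  by move=> y; rewrite /jprod zq wq.
Qed.

Lemma corner_orth q q' x w y : corner q x -> corner q' w ->
  (forall y, q (q' y) = 0) -> x (w y) = 0.
Proof.
move=> [x_V _ xq] [_ q'w _] qq'.
by rewrite -q'w -xq qq' (op_linear0 (inV_linear x_V)).
Qed.

Section OrthogonalSum.
Variables (e : H -> H) (s : nat) (Q : nat -> H -> H) (G : nat -> (H -> H) -> Prop).
Hypothesis e_V : inV ip e.
Hypothesis e_idem : forall y, e (e y) = e y.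
Hypothesis Q_linear : forall k, op_linear (Q k).
Hypothesis Q_orth : forall j k y, (1 <= j <= s)%N -> (1 <= k <= s)%N -> j != k ->
  Q j (Q k y) = 0.
Hypothesis e_Q : forall k y, (1 <= k <= s)%N -> e (Q k y) = 0.
Hypothesis Q_e : forall k y, (1 <= k <= s)%N -> Q k (e y) = 0.
Hypothesis G_jsubalg : forall k, (1 <= k <= s)%N -> jsubalg ip (G k).
Hypothesis G_corner : forall k x, (1 <= k <= s)%N -> G k x -> corner (Q k) x.

Definition orthogonal_sum (z : H -> H) : Prop :=
  exists (lam : R) (X : nat -> H -> H),
    (forall k, (1 <= k <= s)%N -> G k (X k)) /\
    (forall y, z y = (lam%:C)%C *: e y + \sum_(1 <= k < s.+1) X k y).

Lemma G_orth j k x w y : (1 <= j <= s)%N -> (1 <= k <= s)%N -> j != k ->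
  G j x -> G k w -> x (w y) = 0.
Proof.
move=> j_in k_in j_neq_k Gx Gw.
by apply: (corner_orth y (G_corner j_in Gx) (G_corner k_in Gw)) => y'; apply: Q_orth.
Qed.

Lemma e_G k x y : (1 <= k <= s)%N -> G k x -> e (x y) = 0.
Proof.
move=> k_in /(G_corner k_in) x_corner; have e_corner : corner e e by split.
by apply: (corner_orth y e_corner x_corner) => y'; apply: e_Q.
Qed.

Lemma G_e k x y : (1 <= k <= s)%N -> G k x -> x (e y) = 0.
Proof.
move=> k_in /(G_corner k_in) x_corner; have e_corner : corner e e by split.
by apply: (corner_orth y x_corner e_corner) => y'; apply: Q_e.
Qed.

Lemma G_jorthogonal j k : (1 <= j <= s)%N -> (1 <= k <= s)%N -> j <> k ->
  jorthogonal (G j) (G k).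
Proof.
move=> j_in k_in /eqP j_neq_k x w Gx Gw; apply: functional_extensionality => y.
rewrite /jprod /op0 (G_orth _ j_in k_in j_neq_k Gx Gw).
by rewrite (G_orth _ k_in j_in _ Gw Gx) ?addr0 ?scaler0 // eq_sym.
Qed.

Lemma orthogonal_sum_comp z w lam lam' X X' y :
  (forall k, (1 <= k <= s)%N -> G k (X k)) ->
  (forall y, z y = (lam%:C)%C *: e y + \sum_(1 <= k < s.+1) X k y) ->
  (forall k, (1 <= k <= s)%N -> G k (X' k)) ->
  (forall y, w y = (lam'%:C)%C *: e y + \sum_(1 <= k < s.+1) X' k y) ->
  z (w y) = ((lam * lam')%:C)%C *: e y + \sum_(1 <= k < s.+1) X k (X' k y).
Proof.
move=> GX zE GX' wE; rewrite zE wE.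
have X_linear k : (1 <= k <= s)%N -> op_linear (X k).
  by move=> k_in; case: (G_corner k_in (GX k k_in)) => /inV_linear.
rewrite (op_linearD (inV_linear e_V)) (op_linearZ (inV_linear e_V)) e_idem.
rewrite (op_linear_sum (inV_linear e_V)) big1_seq ?addr0; last first.
  by move=> k /andP [_]; rewrite mem_index_iota => k_in; apply: e_G (GX' k k_in).
rewrite scalerA -rmorphM; congr (_ + _); apply: eq_big_nat => k k_in.
rewrite (op_linearD (X_linear k k_in)) (op_linearZ (X_linear k k_in)) (G_e _ k_in (GX k k_in)).
rewrite scaler0 add0r (op_linear_sum (X_linear k k_in)) (sum_nat_single k_in) //.
move=> j j_in j_neq_k; apply: (G_orth y k_in j_in _ (GX k k_in) (GX' j j_in)).
by rewrite eq_sym.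
Qed.

Lemma orthogonal_sum_jsubalg : jsubalg ip orthogonal_sum.
Proof.
split.
- move=> z [lam [X [GX zE]]].
  have X_V : inV ip (fun y => \sum_(1 <= k < s.+1) X k y).
    apply: (jsubalg_sum inV_jsubalg e_V) => k; rewrite mem_index_iota => k_in _.
    by case: (G_corner k_in (GX k k_in)).
  by apply: mem_ext (inV_add (inV_rscale lam e_V) X_V) => y; rewrite /op_add /op_rscale zE.
- move=> z w [lam [X [GX zE]]] [lam' [X' [GX' wE]]].
  exists (lam + lam'), (fun k => op_add (X k) (X' k)); split.
    by move=> k k_in; apply: (jsubalg_add (G_jsubalg k_in)); [apply: GX | apply: GX'].
  by move=> y; rewrite /op_add zE wE rmorphD scalerDl big_split /= addrACA.
- move=> r z [lam [X [GX zE]]]; exists (r * lam), (fun k => op_rscale r (X k)); split.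
    by move=> k k_in; apply: (jsubalg_rscale (G_jsubalg k_in)); apply: GX.
  by move=> y; rewrite /op_rscale zE scalerDr scaler_sumr scalerA -rmorphM.
- move=> z w [lam [X [GX zE]]] [lam' [X' [GX' wE]]].
  exists (lam * lam'), (fun k => jprod (X k) (X' k)); split.
    by move=> k k_in; apply: (jsubalg_jprod (G_jsubalg k_in)); [apply: GX | apply: GX'].
  move=> y; rewrite /jprod (orthogonal_sum_comp y GX zE GX' wE).
  rewrite (orthogonal_sum_comp y GX' wE GX zE) mulrC addrACA scalerDr half_double.
  by rewrite -big_split scaler_sumr.
Qed.

Lemma orthogonal_sum_unique lam (X : nat -> H -> H) :
  (forall k, (1 <= k <= s)%N -> G k (X k)) ->
  (forall y, (lam%:C)%C *: e y + \sum_(1 <= k < s.+1) X k y = 0) ->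
  (forall y, (lam%:C)%C *: e y = 0) /\ (forall k, (1 <= k <= s)%N -> forall y, X k y = 0).
Proof.
move=> GX sum0; have lin_e := inV_linear e_V; split => [y|k k_in y].
  have := congr1 e (sum0 y).
  rewrite (op_linearD lin_e) (op_linearZ lin_e) e_idem (op_linear_sum lin_e) (op_linear0 lin_e).
  rewrite big1_seq ?addr0 // => k /andP [_]; rewrite mem_index_iota => k_in.
  exact: e_G (GX k k_in).
have [_ QX _] := G_corner k_in (GX k k_in).
have := congr1 (Q k) (sum0 y); have lin_Q := Q_linear k.
rewrite (op_linearD lin_Q) (op_linearZ lin_Q) Q_e // scaler0 add0r.
rewrite (op_linear_sum lin_Q) (op_linear0 lin_Q) (sum_nat_single (n := s.+1) k_in) ?QX //.
move=> j j_in j_neq_k.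
by case: (G_corner j_in (GX j j_in)) => _ <- _; rewrite Q_orth // eq_sym.
Qed.

End OrthogonalSum.

(** * The decomposition of V[a, u] *)

Section HalfSpace.
Variables a u : H -> H.
Hypothesis a_proj : projection ip a.
Hypothesis u_half : V_half ip a u.

Let a_V : inV ip a. Proof. by case: a_proj. Qed.
Let u_V : inV ip u. Proof. by case: u_half. Qed.
Let lin_a := inV_linear a_V.
Let lin_u := inV_linear u_V.

Lemma a_idem y : a (a y) = a y. Proof. by case: a_proj. Qed.

Lemma au_ua y : a (u y) + u (a y) = u y.
Proof.
case: u_half => _ /(congr1 (fun f => f y)); rewrite /jprod /op_rscale realc_half.
by move=> /scalerI; apply; rewrite invr_eq0 pnatr_eq0.
Qed.

Lemma aua y : a (u (a y)) = 0.
Proof. by apply: (addIr (u (a y))); rewrite add0r -{2}(a_idem y) au_ua. Qed.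

Definition au2a y := a (u (u (a y))).

Lemma uua y : u (u (a y)) = au2a y.
Proof. by rewrite -{1}(au_ua (u (a y))) aua (op_linear0 lin_u) addr0. Qed.

Lemma au2a_jprod : jprod a (jprod u u) = au2a.
Proof.
have auu y : a (u (u y)) = au2a y.
  by rewrite -{1}(au_ua y) (op_linearD lin_u) (op_linearD lin_a) aua add0r.
apply: functional_extensionality => y.
by rewrite /jprod !half_double uua auu half_double.
Qed.

Lemma au2a_V : inV ip au2a.
Proof. by rewrite -au2a_jprod; apply: inV_jprod a_V (inV_jprod u_V u_V). Qed.

Lemma au2a_ip y : ip (au2a y) y = ip (u (a y)) (u (a y)).
Proof. by rewrite /au2a (inV_selfadj a_V) (inV_selfadj u_V). Qed.

Lemma au2a_pos y : 0 <= ip (au2a y) y.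
Proof. by rewrite au2a_ip ip_ge0. Qed.

Lemma finite_rank_au2a : finite_rank a -> finite_rank au2a.
Proof. by case=> n [e he]; exists n, e => y; apply: he. Qed.

Lemma a_au2a y : a (au2a y) = au2a y. Proof. by rewrite /au2a a_idem. Qed.
Lemma au2a_a y : au2a (a y) = au2a y. Proof. by rewrite /au2a a_idem. Qed.

Section Decomposition.
Variable ms : seq C.
Hypothesis ms_uniq : uniq ms.
Hypothesis ms_gt0 : all (fun m => 0 < m) ms.
Hypothesis ann_ms : annihilates au2a (PX (0 :: ms)).
Local Notation s := (size ms).
(* Node 0 is the eigenvalue 0 of au2a, whose eigenprojection yields a0. *)
Local Notation mu k := ((0 :: ms)`_k).
Local Notation P := (eigenproj au2a (0 :: ms)).

Lemma mu_gt0 k : (1 <= k <= s)%N -> 0 < mu k.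
Proof. by case: k => // k /= lt_k; move/allP: ms_gt0; apply; apply: mem_nth. Qed.

Lemma nodes_uniq : uniq (0 :: ms).
Proof. by rewrite /= ms_uniq andbT; apply/negP => /(allP ms_gt0); rewrite ltxx. Qed.

Lemma nodes_real : all (fun m => m \is Num.real) (0 :: ms).
Proof. by rewrite /= real0; apply/allP => m /(allP ms_gt0) /gtr0_real. Qed.

Lemma P_V k : inV ip (P k).
Proof. exact: (inV_eigenproj au2a_V k nodes_real). Qed.
Let lin_P k := inV_linear (P_V k).

Lemma P_idem k y : (k <= s)%N -> P k (P k y) = P k y.
Proof. by move=> k_le; apply: (eigenproj_idem au2a_V nodes_uniq ann_ms). Qed.

Lemma P_orth j k y : (j <= s)%N -> (k <= s)%N -> j != k -> P j (P k y) = 0.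
Proof. by move=> j_le k_le; apply: (eigenproj_orth au2a_V nodes_uniq ann_ms). Qed.

Lemma au2a_P k y : (k <= s)%N -> au2a (P k y) = mu k *: P k y.
Proof. by move=> k_le; apply: (eigenproj_eigen au2a_V nodes_uniq ann_ms). Qed.

Lemma P_a k y : P k (a y) = a (P k y).
Proof. by rewrite (eigenproj_commute _ _ _ lin_a) // => x; rewrite a_au2a au2a_a. Qed.

Lemma a_P k y : (1 <= k <= s)%N -> a (P k y) = P k y.
Proof.
move=> /andP [k_gt0 k_le]; have mu_neq0 : mu k != 0 by rewrite gt_eqF ?mu_gt0 ?k_gt0.
have -> : P k y = (mu k)^-1 *: au2a (P k y) by rewrite au2a_P // scalerA mulVf ?scale1r.
by rewrite (op_linearZ lin_a) a_au2a.
Qed.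

Lemma P_a_pos k y : (1 <= k <= s)%N -> P k (a y) = P k y.
Proof. by move=> k_in; rewrite P_a a_P. Qed.

Definition a0 y := a (P 0 y).

Lemma a0_projection : projection ip a0.
Proof.
split; last by move=> y; rewrite /a0 P_a a_idem P_idem.
by apply: inV_comp a_V (P_V 0) _ => y; rewrite P_a.
Qed.
Let a0_V : inV ip a0. Proof. by case: a0_projection. Qed.
Let lin_a0 := inV_linear a0_V.

Lemma a0_idem y : a0 (a0 y) = a0 y. Proof. by case: a0_projection => _; apply. Qed.

(* |u (a0 y)|^2 = <au2a (a0 y), a0 y> and au2a vanishes on the range of a0. *)
Lemma u_a0 y : u (a0 y) = 0.
Proof.
have a0E : a (a0 y) = a0 y by rewrite /a0 a_idem.
by apply: ip_eq0; rewrite -a0E -au2a_ip /a0 au2a_a au2a_P // scale0r ip0l.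
Qed.

Lemma a0_u y : a0 (u y) = 0.
Proof. by apply: ip_eq0; rewrite (inV_selfadj a0_V) a0_idem (inV_selfadj u_V) u_a0 ip0r. Qed.

Lemma a0_P k y : (1 <= k <= s)%N -> a0 (P k y) = 0.
Proof. by move=> /andP [k_gt0 k_le]; rewrite /a0 P_orth ?(op_linear0 lin_a) // eq_sym -lt0n. Qed.

Lemma P_a0 k y : (1 <= k <= s)%N -> P k (a0 y) = 0.
Proof.
move=> /andP [k_gt0 k_le]; rewrite /a0 P_a P_orth ?(op_linear0 lin_a) //.
by rewrite -lt0n.
Qed.

Lemma a_decomp y : a y = a0 y + \sum_(1 <= k < s.+1) P k y.
Proof.
rewrite -{1}(sum_eigenproj au2a_V nodes_uniq ann_ms y) (op_linear_sum lin_a).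
rewrite big_ord_recl big_add1 big_mkord /=; congr (_ + _).
by apply: eq_bigr => k _; rewrite /bump add1n a_P ?ltn_ord.
Qed.

Lemma P_u_P j k y : (1 <= j <= s)%N -> (1 <= k <= s)%N -> P k (u (P j y)) = 0.
Proof.
move=> j_in k_in; rewrite -(a_P _ j_in) -(P_a_pos _ k_in) aua.
exact: op_linear0 (lin_P k).
Qed.

Lemma P_uu_P j k y : (1 <= j <= s)%N -> P k (u (u (P j y))) = mu j *: P k (P j y).
Proof.
move=> j_in; rewrite -(a_P _ j_in) uua au2a_P; last by case/andP: j_in.
by rewrite (op_linearZ (lin_P k)) a_P.
Qed.

Definition sigma k : R := Num.sqrt (complex.Re (mu k)).

Lemma sigma_gt0 k : (1 <= k <= s)%N -> 0 < sigma k.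
Proof.
move=> k_in; rewrite sqrtr_gt0 -ltcR RRe_real ?mu_gt0 //.
exact/gtr0_real/mu_gt0.
Qed.

Lemma sigma_normalizes k : (1 <= k <= s)%N -> ((sigma k)^-1%:C * (sigma k)^-1%:C * mu k = 1)%C.
Proof.
move=> k_in; rewrite -(RRe_real (gtr0_real (mu_gt0 k_in))) -!rmorphM /=.
have sigma_neq0 : sigma k != 0 by rewrite gt_eqF ?sigma_gt0.
rewrite -[X in _ * X](@sqr_sqrtr _ (complex.Re (mu k))) -/(sigma k); last first.
  by rewrite -lecR RRe_real ?ltW ?mu_gt0 // gtr0_real ?mu_gt0.
by rewrite -expr2 -exprMn mulVf // expr1n rmorph1.
Qed.

Definition tri k y := ((sigma k)^-1%:C)%C *: (P k (u y) + u (P k y)).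
Local Notation c k := (((sigma k)^-1%:C)%C : C).

Lemma tri_linear k : op_linear (tri k).
Proof.
move=> d x y; rewrite /tri !(lin_P k) !lin_u !(lin_P k) !scalerDr !scalerA mulrC.
by rewrite addrACA.
Qed.

Lemma tri_jprod k : tri k = op_rscale (2 * (sigma k)^-1) (jprod (P k) u).
Proof.
apply: functional_extensionality => y.
rewrite /tri /op_rscale /jprod rmorphM rmorph_nat scalerA -mulrA mulrCA.
by rewrite mulfV ?pnatr_eq0 // mulr1.
Qed.

Lemma tri_V k : inV ip (tri k).
Proof. by rewrite tri_jprod; apply/inV_rscale/inV_jprod; [apply: P_V | apply: u_V]. Qed.

Section FixedIndex.
Variable k : nat.
Hypothesis k_in : (1 <= k <= s)%N.
Let k_le : (k <= s)%N. Proof. by case/andP: k_in. Qed.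

Lemma P_tri y : P k (tri k y) = c k *: P k (u y).
Proof. by rewrite /tri (op_linearZ (lin_P k)) (op_linearD (lin_P k)) P_idem // P_u_P // addr0. Qed.

Lemma tri_P y : tri k (P k y) = c k *: u (P k y).
Proof. by rewrite /tri P_idem // P_u_P // add0r. Qed.

Lemma tri_half : V_half ip (P k) (tri k).
Proof.
split; first exact: tri_V.
apply: functional_extensionality => y.
by rewrite /jprod /op_rscale P_tri tri_P -scalerDr realc_half.
Qed.

Lemma tri_tri y : tri k (tri k y) = (c k * c k) *: (mu k *: P k y + u (P k (u y))).
Proof.
rewrite {1}/tri P_tri /tri !(op_linearZ lin_u) (op_linearZ (lin_P k)) (op_linearD lin_u).
by rewrite (op_linearD (lin_P k)) P_u_P // P_uu_P // P_idem // add0r -scalerDr scalerA.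
Qed.

Lemma tri_tripotent : tripotent (tri k).
Proof.
move=> y; rewrite tri_tri P_tri /tri !(op_linearZ lin_u) !(op_linearZ (lin_P k)).
rewrite (op_linearD lin_u) (op_linearD (lin_P k)) P_u_P // P_uu_P // P_idem // add0r.
rewrite !(op_linearZ lin_u) !scalerA [mu k * c k]mulrC -scalerDr scalerA.
have -> : c k * c k * (c k * mu k) = c k * (c k * c k * mu k) by ring.
by rewrite sigma_normalizes // mulr1.
Qed.

Definition tri_sq y := tri k (tri k y).

Lemma P_tri_sq y : P k (tri_sq y) = P k y.
Proof.
rewrite /tri_sq tri_tri (op_linearZ (lin_P k)) (op_linearD (lin_P k)) (op_linearZ (lin_P k)).
by rewrite P_idem // P_u_P // addr0 scalerA sigma_normalizes // scale1r.
Qed.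

Lemma tri_sq_P y : tri_sq (P k y) = P k y.
Proof.
rewrite /tri_sq tri_tri P_idem // P_u_P // (op_linear0 lin_u) addr0 scalerA.
by rewrite sigma_normalizes // scale1r.
Qed.

Lemma a0_tri y : a0 (tri k y) = 0.
Proof. by rewrite /tri (op_linearZ lin_a0) (op_linearD lin_a0) a0_u a0_P // addr0 scaler0. Qed.

Lemma tri_a0 y : tri k (a0 y) = 0.
Proof.
by rewrite /tri u_a0 P_a0 // (op_linear0 lin_u) (op_linear0 (lin_P k)) addr0 scaler0.
Qed.

End FixedIndex.

Lemma tri_orth j k y : (1 <= j <= s)%N -> (1 <= k <= s)%N -> j != k ->
  tri j (tri k y) = 0.
Proof.
move=> j_in k_in j_neq_k; have /andP [_ j_le] := j_in; have /andP [_ k_le] := k_in.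
rewrite /tri !(op_linearZ lin_u) !(op_linearZ (lin_P j)) (op_linearD lin_u).
rewrite !(op_linearD (lin_P j)) !P_u_P // P_uu_P // !P_orth //.
by rewrite !(addr0, add0r, scaler0, op_linear0 lin_u).
Qed.

Local Notation G k := (gen ip (P k) (tri k)).

Lemma tri_sq_linear k : op_linear (tri_sq k).
Proof. exact: op_linear_comp (tri_linear k) (tri_linear k). Qed.

Lemma tri_sq_orth j k y : (1 <= j <= s)%N -> (1 <= k <= s)%N -> j != k ->
  tri_sq j (tri_sq k y) = 0.
Proof.
move=> j_in k_in j_neq_k.
by rewrite /tri_sq (tri_orth _ j_in k_in j_neq_k) (op_linear0 (tri_linear j)).
Qed.

Lemma a0_tri_sq k y : (1 <= k <= s)%N -> a0 (tri_sq k y) = 0.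
Proof. by move=> k_in; rewrite /tri_sq a0_tri. Qed.

Lemma tri_sq_a0 k y : (1 <= k <= s)%N -> tri_sq k (a0 y) = 0.
Proof. by move=> k_in; rewrite /tri_sq tri_a0 // (op_linear0 (tri_linear k)). Qed.

Lemma gen_corner k x : (1 <= k <= s)%N -> G k x -> corner (tri_sq k) x.
Proof.
move=> k_in; apply; first exact/corner_jsubalg/tri_sq_linear.
  by split; [exact: P_V | exact: tri_sq_P | exact: P_tri_sq].
by split; [exact: tri_V | exact: tri_tripotent | move=> y; rewrite /tri_sq tri_tripotent].
Qed.

Lemma gen_jorthogonal j k : (1 <= j <= s)%N -> (1 <= k <= s)%N -> j <> k ->
  jorthogonal (G j) (G k).
Proof. exact: (G_jorthogonal (G := fun k => G k) tri_sq_orth gen_corner). Qed.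

Lemma jprod_a0_u : jprod a0 u = op0 (H:=H).
Proof.
by apply: functional_extensionality => y; rewrite /jprod /op0 a0_u u_a0 addr0 scaler0.
Qed.

Lemma u_decomp y : u y = \sum_(1 <= k < s.+1) op_rscale (sigma k) (tri k) y.
Proof.
have tri_scaled k : (1 <= k < s.+1)%N ->
    op_rscale (sigma k) (tri k) y = P k (u y) + u (P k y).
  move=> k_in; rewrite /op_rscale /tri scalerA -rmorphM mulfV ?rmorph1 ?scale1r //.
  by rewrite gt_eqF ?sigma_gt0.
rewrite (eq_big_nat _ _ tri_scaled) big_split /= -(op_linear_sum lin_u).
have sumP z : \sum_(1 <= k < s.+1) P k z = a z - a0 z by rewrite a_decomp addrC addKr.
by rewrite !sumP a0_u (op_linearB lin_u) u_a0 !subr0 au_ua.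
Qed.

Lemma gen_au_sub_orthogonal_sum z : gen ip a u z -> orthogonal_sum a0 s (fun k => G k) z.
Proof.
have G_jsubalg k : (1 <= k <= s)%N -> jsubalg ip (G k).
  by move=> _; apply: gen_jsubalg (P_V k) (tri_V k).
apply; first exact: orthogonal_sum_jsubalg a0_V a0_idem tri_sq_orth a0_tri_sq tri_sq_a0
  G_jsubalg gen_corner.
- exists 1, P; split => [k _|y]; first exact: gen_l.
  by rewrite rmorph1 scale1r a_decomp.
- exists 0, (fun k => op_rscale (sigma k) (tri k)); split => [k _|y].
    by apply: gen_rscale; apply: gen_r.
  by rewrite rmorph0 scale0r add0r u_decomp.
Qed.

Lemma au2a_gen : gen ip a u au2a.
Proof. by rewrite -au2a_jprod; do !apply: gen_jprod; [apply: gen_l | apply: gen_r ..]. Qed.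

Lemma P_gen k : (1 <= k <= s)%N -> gen ip a u (P k).
Proof.
case/andP => k_gt0 k_le; apply: (jsubalg_horner_op (gen_jsubalg a_V u_V) au2a_gen).
  exact: lagrange_real nodes_real.
have := lagrange_node nodes_uniq k_le (ltn0Sn s).
by rewrite /= horner_coef0 eq_sym (negbTE (lt0n_neq0 k_gt0)).
Qed.

Lemma tri_gen k : (1 <= k <= s)%N -> gen ip a u (tri k).
Proof.
move=> k_in; rewrite tri_jprod; apply: gen_rscale.
by apply: gen_jprod; [apply: P_gen | apply: gen_r].
Qed.

Lemma orthogonal_sum_sub_gen_au z : orthogonal_sum a0 s (fun k => G k) z -> gen ip a u z.
Proof.
have gen_alg := gen_jsubalg a_V u_V.
have gen_sum (F : nat -> H -> H) : (forall k, (1 <= k <= s)%N -> gen ip a u (F k)) ->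
    gen ip a u (fun y => \sum_(1 <= k < s.+1) F k y).
  move=> gen_F; apply: (jsubalg_sum gen_alg (@gen_l a u)) => k.
  by rewrite mem_index_iota => k_in _; apply: gen_F.
have a0_gen : gen ip a u a0.
  apply: mem_ext (gen_add (@gen_l a u) (gen_rscale (-1) (gen_sum _ P_gen))) => y.
  by rewrite /op_add /op_rscale rmorphN1 scaleN1r a_decomp addrK.
case=> lam [X [GX zE]].
apply: mem_ext (gen_add (gen_rscale lam a0_gen) (gen_sum _ _)) => [y|k k_in].
  by rewrite /op_add /op_rscale zE.
exact: GX k k_in _ gen_alg (P_gen k_in) (tri_gen k_in).
Qed.

Lemma P_projection k : (1 <= k <= s)%N -> projection ip (P k).
Proof. by case/andP => _ k_le; split => [|y]; [apply: P_V | apply: P_idem]. Qed.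

Lemma gen_au_E z : gen ip a u z <-> orthogonal_sum a0 s (fun k => G k) z.
Proof. by split; [apply: gen_au_sub_orthogonal_sum | apply: orthogonal_sum_sub_gen_au]. Qed.

Lemma decomposition_unique lam (X : nat -> H -> H) :
  (forall k, (1 <= k <= s)%N -> G k (X k)) ->
  (forall y, (lam%:C)%C *: a0 y + \sum_(1 <= k < s.+1) X k y = 0) ->
  (forall y, (lam%:C)%C *: a0 y = 0) /\ (forall k, (1 <= k <= s)%N -> forall y, X k y = 0).
Proof.
exact: (orthogonal_sum_unique (G := fun k => G k) a0_V a0_idem tri_sq_linear tri_sq_orth a0_tri_sq
  tri_sq_a0 gen_corner).
Qed.

End Decomposition.

End HalfSpace.

End InnerProduct.
End Operators.

Theorem theorem2p5 (R : realType) (H : lmodType R[i]) (ip : H -> H -> R[i])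
  (hH : is_hilbert ip) (a u : H -> H)
  (ha : projection ip a) (hfin : finite_rank a) (hu : V_half ip a u) :
  exists (s : nat) (a0 : H -> H) (ak uk : nat -> H -> H),
    projection ip a0 /\
        (forall k, (1 <= k <= s)%N -> projection ip (ak k)) /\
        (forall x, a x = a0 x + \sum_(1 <= k < s.+1) ak k x) /\
        (forall k, (1 <= k <= s)%N -> tripotent (uk k) /\ V_half ip (ak k) (uk k)) /\
        (forall j k, (1 <= j <= s)%N -> (1 <= k <= s)%N -> j <> k ->
           jorthogonal (gen ip (ak j) (uk j)) (gen ip (ak k) (uk k))) /\
        jprod a0 u = op0 (H:=H) /\
        (forall z, gen ip a u z <->
           exists (lam : R) (x : nat -> H -> H),
             (forall k, (1 <= k <= s)%N -> gen ip (ak k) (uk k) (x k)) /\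
             (forall y, z y = (lam%:C)%C *: a0 y + \sum_(1 <= k < s.+1) x k y)) /\
        (forall (lam : R) (x : nat -> H -> H),
           (forall k, (1 <= k <= s)%N -> gen ip (ak k) (uk k) (x k)) ->
           (forall y, (lam%:C)%C *: a0 y + \sum_(1 <= k < s.+1) x k y = 0) ->
           (forall y, (lam%:C)%C *: a0 y = 0) /\
           (forall k, (1 <= k <= s)%N -> forall y, x k y = 0))
.
Proof.
have [ms [ms_uniq ms_gt0 ann]] := positive_spectral_nodes hH (au2a_V hH ha hu)
  (au2a_pos hH ha hu) (finite_rank_au2a u hfin).
exists (size ms), (a0 a u ms), (eigenproj (au2a a u) (0 :: ms)), (tri a u ms).
split; first exact: a0_projection.
split; first by move=> k; apply: P_projection.
split; first exact: (a_decomp hH ha hu ms_uniq ms_gt0 ann).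
split; first by move=> k k_in; split;
  [exact: (tri_tripotent hH ha hu ms_uniq ms_gt0 ann k_in) | exact: tri_half].
split; first exact: gen_jorthogonal.
split; first exact: (jprod_a0_u hH ha hu ms_uniq ms_gt0 ann).
split; first exact: gen_au_E.
exact: decomposition_unique.
Qed.
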